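(* Consider a channel network whose links are divided into computational cells. For a cell $k$ of length $\Delta x_k>0$ with interior interfaces $x_{k-1/2}$ (left) and $x_{k+1/2}$ (right), let $\bar A_k^n\ge 0$ be the cell-averaged wetted area at time level $n$. At each interface $x_{j+1/2}$ let there be given reconstructed one-sided areas $A^{\pm}_{j+1/2}\ge 0$, velocities $u^{\pm}_{j+1/2}\in\mathbb R$, celerities $c^{\pm}_{j+1/2}\ge 0$, discharges $Q^{\pm}_{j+1/2}=A^{\pm}_{j+1/2}u^{\pm}_{j+1/2}$, and one-sided speeds $$a^+_{j+1/2}=\max\{0,\,u^+_{j+1/2}+c^+_{j+1/2},\,u^-_{j+1/2}+c^-_{j+1/2}\},\qquad a^-_{j+1/2}=\min\{0,\,u^+_{j+1/2}-c^+_{j+1/2},\,u^-_{j+1/2}-c^-_{j+1/2}\},$$ and assume $a^+_{j+1/2}-a^-_{j+1/2}>0$. Define the mass flux $$H^{(1)}_{j+1/2}=\frac{a^+_{j+1/2}Q^-_{j+1/2}-a^-_{j+1/2}Q^+_{j+1/2}}{a^+_{j+1/2}-a^-_{j+1/2}}+\frac{a^+_{j+1/2}a^-_{j+1/2}}{a^+_{j+1/2}-a^-_{j+1/2}}\big(A^+_{j+1/2}-A^-_{j+1/2}\big).$$ (i) (Interior cells.) Let $\bar A_k^{n+1}=\bar A_k^n-\frac{\Delta t}{\Delta x_k}\big(H^{(1)}_{k+1/2}-H^{(1)}_{k-1/2}\big)$. If $\Delta t>0$ satisfies $$\Delta t\le \Delta t_k:=\min\Big\{\frac{\Delta x_k}{a^+_{k-1/2}-a^-_{k+1/2}},\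 \frac{\Delta x_k\,\bar A_k^n}{a^+_{k+1/2}A^-_{k+1/2}-a^-_{k-1/2}A^+_{k-1/2}}\Big\}$$ (where a quotient with nonpositive denominator is interpreted as $+\infty$), then $\bar A_k^{n+1}\ge 0$. (ii) (Junction nodes.) Let a node $s$ have a set $J_{s,in}$ of inflowing links, each $i$ ending at the node with last interface $x_{i,n_i+1/2}$, and a set $J_{s,out}$ of outflowing links, each $j$ starting at the node with first interface $x_{j,1/2}$. Let the node control volume consist of pieces of lengths $\Delta x^{in}_{s,i}>0$, $\Delta x^{out}_{s,j}>0$ with average areas $\bar A^{in,n}_{s,i}\ge0$, $\bar A^{out,n}_{s,j}\ge0$, and define the total volumes $V^n_s=\sum_{i\in J_{s,in}}\Delta x^{in}_{s,i}\bar A^{in,n}_{s,i}+\sum_{j\in J_{s,out}}\Delta x^{out}_{s,j}\bar A^{out,n}_{s,j}$ and $$V_s^{n+1}=V_s^n+\Delta t\sum_{i\in J_{s,in}}H^{(1)}_{i,n_i+1/2}-\Delta t\sum_{j\in J_{s,out}}H^{(1)}_{j,1/2}.$$ If $$\Delta t\le\Delta t_s:=\min\Big\{\min_{i\in J_{s,in}}\Big[\frac{\Delta x^{in}_{s,i}}{a^+_{i,n_i+1/2}},\ \frac{-\Delta x^{in}_{s,i}\bar A^{in,n}_{s,i}}{a^-_{i,n_i+1/2}A^+_{i,n_i+1/2}}\Big],\ \min_{j\in J_{s,out}}\Big[\frac{-\Delta x^{out}_{s,j}}{a^-_{j,1/2}},\ \frac{\Delta x^{out}_{s,j}\bar A^{out,n}_{s,j}}{a^+_{j,1/2}A^-_{j,1/2}}\Big]\Big\}$$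 (with quotients having zero denominator interpreted as $+\infty$), then $V_s^{n+1}\ge 0$. Consequently, if $\Delta t\le\min\{\min_{k}\Delta t_k,\min_s\Delta t_s\}$, all updated cell areas and node volumes are nonnegative.
   Context: This is the mass-conservation part of a first-order-in-time (forward Euler) central-upwind finite-volume scheme for the one-dimensional Saint Venant equations $A_t+Q_x=0$, $Q_t+(Q^2/A+gI_1)_x=\dots$ on a channel network, where $A$ is the wetted cross-sectional area, $Q=Au$ the discharge, and $c=\sqrt{gA/\sigma_T}$ the celerity ($\sigma_T$ the free-surface width). The momentum update (with implicit treatment of friction) does not affect the area update. *)

From Stdlib Require Import Reals Lra List.
Open Scope R_scope.

(* Reconstructed one-sided data at one interface x_{j+1/2}:
   A^-, A^+ (areas), u^-, u^+ (velocities), c^-, c^+ (celerities). *)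
Record iface := mkIface {
  Am : R; Ap : R;
  um : R; up : R;
  cm : R; cp : R }.

Definition Qm (f : iface) : R := Am f * um f.
Definition Qp (f : iface) : R := Ap f * up f.

Definition aplus (f : iface) : R :=
  Rmax 0 (Rmax (up f + cp f) (um f + cm f)).
Definition aminus (f : iface) : R :=
  Rmin 0 (Rmin (up f - cp f) (um f - cm f)).

Definition iface_ok (f : iface) : Prop :=
  0 <= Am f /\ 0 <= Ap f /\ 0 <= cm f /\ 0 <= cp f /\
  aplus f - aminus f > 0.

Definition H1 (f : iface) : R :=
  (aplus f * Qm f - aminus f * Qp f) / (aplus f - aminus f)
  + (aplus f * aminus f) / (aplus f - aminus f) * (Ap f - Am f).

(* "dt <= num/den", where a quotient with nonpositive denominator is +infinity *)
Definition le_quot_pos (dt num den : R) : Prop := 0 < den -> dt <= num / den.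

(* "dt <= num/den", where a quotient with zero denominator is +infinity *)
Definition le_quot_nz (dt num den : R) : Prop := den <> 0 -> dt <= num / den.

Definition cell_update (dt dx Abar : R) (fL fR : iface) : R :=
  Abar - dt / dx * (H1 fR - H1 fL).

(* A piece of a node control volume attached to one link:
   length dx, average area Abar, and the link interface at the node
   (last interface x_{i,n_i+1/2} for inflowing links,
    first interface x_{j,1/2} for outflowing links). *)
Record piece := mkPiece { pdx : R; pA : R; pf : iface }.

Definition sumR (l : list R) : R := fold_right Rplus 0 l.

Definition node_volume (ins outs : list piece) : R :=
  sumR (map (fun p => pdx p * pA p) ins) + sumR (map (fun p => pdx p * pA p) outs).

Definition node_update (dt : R) (ins outs : list piece) : R :=
  node_volume ins outs + dt * sumR (map (fun p => H1 (pf p)) ins)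
                       - dt * sumR (map (fun p => H1 (pf p)) outs).

(* Time-step restriction at a node, in the "for all terms of the min" form *)
Definition node_cfl (dt : R) (ins outs : list piece) : Prop :=
  (forall p, In p ins ->
     le_quot_nz dt (pdx p) (aplus (pf p)) /\
     le_quot_nz dt (- (pdx p * pA p)) (aminus (pf p) * Ap (pf p))) /\
  (forall p, In p outs ->
     le_quot_nz dt (- pdx p) (aminus (pf p)) /\
     le_quot_nz dt (pdx p * pA p) (aplus (pf p) * Am (pf p))).

Definition piece_ok (p : piece) : Prop :=
  0 < pdx p /\ 0 <= pA p /\ iface_ok (pf p).

From Pilot Require Import Defs.
From Stdlib Require Import Reals List Lra.
Open Scope R_scope.

(* Since a^- <= min(u^+, u^-, 0) and a^+ >= max(u^+, u^-, 0), the flux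
   H^(1) = (a^+ A^- (u^- - a^-) + a^- A^+ (a^+ - u^+)) / (a^+ - a^-)
   lies between a^- A^+ <= 0 and a^+ A^- >= 0.  So a cell, or a piece of a
   node control volume, loses at most dt a^+ A^- through an interface where
   the flux leaves it and dt (-a^- A^+) through one where the flux enters it,
   and the second CFL quotient is exactly what keeps these losses below the
   available volume dx Abar. *)

Lemma aplus_ge0 f : 0 <= aplus f.
Proof. apply Rmax_l. Qed.

Lemma aminus_le0 f : aminus f <= 0.
Proof. apply Rmin_l. Qed.

Lemma up_le_aplus f : 0 <= cp f -> Defs.up f <= aplus f.
Proof.
  intros hc; unfold aplus.
  pose proof (Rmax_l (Defs.up f + cp f) (um f + cm f)).
  pose proof (Rmax_r 0 (Rmax (Defs.up f + cp f) (um f + cm f))); lra.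
Qed.

Lemma um_le_aplus f : 0 <= cm f -> um f <= aplus f.
Proof.
  intros hc; unfold aplus.
  pose proof (Rmax_r (Defs.up f + cp f) (um f + cm f)).
  pose proof (Rmax_r 0 (Rmax (Defs.up f + cp f) (um f + cm f))); lra.
Qed.

Lemma aminus_le_up f : 0 <= cp f -> aminus f <= Defs.up f.
Proof.
  intros hc; unfold aminus.
  pose proof (Rmin_l (Defs.up f - cp f) (um f - cm f)).
  pose proof (Rmin_r 0 (Rmin (Defs.up f - cp f) (um f - cm f))); lra.
Qed.

Lemma aminus_le_um f : 0 <= cm f -> aminus f <= um f.
Proof.
  intros hc; unfold aminus.
  pose proof (Rmin_r (Defs.up f - cp f) (um f - cm f)).
  pose proof (Rmin_r 0 (Rmin (Defs.up f - cp f) (um f - cm f))); lra.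
Qed.

Lemma H1_weighted f : aplus f - aminus f <> 0 ->
  H1 f = (aplus f * Am f * (um f - aminus f) + aminus f * Ap f * (aplus f - Defs.up f))
         / (aplus f - aminus f).
Proof. intros hd; unfold H1, Qm, Qp; field; exact hd. Qed.

Lemma H1_le_aplus_Am f : iface_ok f -> H1 f <= aplus f * Am f.
Proof.
  intros hf; pose proof hf as (hAm & hAp & hcm & hcp & hgap).
  rewrite H1_weighted by lra.
  apply Rmult_le_reg_r with (aplus f - aminus f); [lra|].
  unfold Rdiv; rewrite (Rmult_assoc _ (/ _)), Rinv_l, Rmult_1_r by lra.
  assert (0 <= aplus f * Am f * (aplus f - um f)).
  { apply Rmult_le_pos; [apply Rmult_le_pos, hAm; apply aplus_ge0|].
    pose proof (um_le_aplus f hcm); lra. }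
  assert (0 <= - aminus f * Ap f * (aplus f - Defs.up f)).
  { apply Rmult_le_pos; [apply Rmult_le_pos, hAp; pose proof (aminus_le0 f); lra|].
    pose proof (up_le_aplus f hcp); lra. }
  nra.
Qed.

Lemma aminus_Ap_le_H1 f : iface_ok f -> aminus f * Ap f <= H1 f.
Proof.
  intros hf; pose proof hf as (hAm & hAp & hcm & hcp & hgap).
  rewrite H1_weighted by lra.
  apply Rmult_le_reg_r with (aplus f - aminus f); [lra|].
  unfold Rdiv; rewrite (Rmult_assoc _ (/ _)), Rinv_l, Rmult_1_r by lra.
  assert (0 <= aplus f * Am f * (um f - aminus f)).
  { apply Rmult_le_pos; [apply Rmult_le_pos, hAm; apply aplus_ge0|].
    pose proof (aminus_le_um f hcm); lra. }
  assert (0 <= - aminus f * Ap f * (Defs.up f - aminus f)).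
  { apply Rmult_le_pos; [apply Rmult_le_pos, hAp; pose proof (aminus_le0 f); lra|].
    pose proof (aminus_le_up f hcp); lra. }
  nra.
Qed.

Lemma le_quot_pos_mul_le dt V x :
  0 <= x -> 0 <= V -> le_quot_pos dt V x -> dt * x <= V.
Proof.
  intros hx hV hq; destruct (Req_dec x 0) as [->|hnz]; [lra|].
  assert (hxpos : 0 < x) by lra.
  specialize (hq hxpos).
  apply Rmult_le_compat_r with (r := x) in hq; [|lra].
  unfold Rdiv in hq; rewrite Rmult_assoc, Rinv_l, Rmult_1_r in hq by lra.
  exact hq.
Qed.

Lemma le_quot_nz_pos dt V x : le_quot_nz dt V x -> le_quot_pos dt V x.
Proof. intros hq hx; apply hq; lra. Qed.

Lemma le_quot_nz_opp dt V x : le_quot_nz dt (- V) x -> le_quot_nz dt V (- x).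
Proof.
  intros hq hx; rewrite Rdiv_opp_r, <- Rdiv_opp_l; apply hq; lra.
Qed.

Lemma cell_update_nonneg dt dx Abar fL fR :
  0 < dx -> 0 <= Abar -> iface_ok fL -> iface_ok fR -> 0 < dt ->
  le_quot_pos dt (dx * Abar) (aplus fR * Am fR - aminus fL * Ap fL) ->
  0 <= cell_update dt dx Abar fL fR.
Proof.
  intros hdx hA hL hR hdt hq; unfold cell_update.
  set (D := aplus fR * Am fR - aminus fL * Ap fL) in *.
  assert (hflux : H1 fR - H1 fL <= D).
  { pose proof (H1_le_aplus_Am fR hR); pose proof (aminus_Ap_le_H1 fL hL); unfold D; lra. }
  assert (hD : 0 <= D).
  { destruct hL as (_ & hApL & _); destruct hR as (hAmR & _).
    pose proof (Rmult_le_pos _ _ (aplus_ge0 fR) hAmR).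
    pose proof (Rmult_le_pos _ _ (Ropp_0_ge_le_contravar _ (Rle_ge _ _ (aminus_le0 fL))) hApL).
    unfold D; lra. }
  assert (hvol : dt * D <= dx * Abar)
    by (apply le_quot_pos_mul_le; [exact hD | apply Rmult_le_pos; lra | exact hq]).
  assert (hloss : dt / dx * (H1 fR - H1 fL) <= Abar).
  { apply Rmult_le_reg_l with dx; [exact hdx|].
    replace (dx * (dt / dx * (H1 fR - H1 fL))) with (dt * (H1 fR - H1 fL)) by (field; lra).
    pose proof (Rmult_le_compat_l dt _ _ (Rlt_le _ _ hdt) hflux); lra. }
  lra.
Qed.

Lemma sumR_map_add_scale {A : Type} (f g : A -> R) (c : R) (l : list A) :
  sumR (map (fun x => f x + c * g x) l) = sumR (map f l) + c * sumR (map g l).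
Proof. induction l as [|x l IH]; simpl; [ring | rewrite IH; ring]. Qed.

Lemma sumR_map_nonneg {A : Type} (f : A -> R) (l : list A) :
  (forall x, In x l -> 0 <= f x) -> 0 <= sumR (map f l).
Proof.
  induction l as [|x l IH]; intros hl; simpl; [lra|].
  pose proof (hl x (or_introl eq_refl)).
  pose proof (IH (fun y hy => hl y (or_intror hy))); lra.
Qed.

Lemma inflow_piece_nonneg dt p :
  0 <= dt -> piece_ok p ->
  le_quot_nz dt (- (pdx p * pA p)) (aminus (pf p) * Ap (pf p)) ->
  0 <= pdx p * pA p + dt * H1 (pf p).
Proof.
  intros hdt (hdx & hA & hf) hq.
  apply le_quot_nz_opp, le_quot_nz_pos, le_quot_pos_mul_le in hq.
  - pose proof (Rmult_le_compat_l dt _ _ hdt (aminus_Ap_le_H1 _ hf)); lra.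
  - destruct hf as (_ & hAp & _).
    pose proof (aminus_le0 (pf p)); rewrite Ropp_mult_distr_l.
    apply Rmult_le_pos; lra.
  - apply Rmult_le_pos; lra.
Qed.

Lemma outflow_piece_nonneg dt p :
  0 <= dt -> piece_ok p ->
  le_quot_nz dt (pdx p * pA p) (aplus (pf p) * Am (pf p)) ->
  0 <= pdx p * pA p + - dt * H1 (pf p).
Proof.
  intros hdt (hdx & hA & hf) hq.
  apply le_quot_nz_pos, le_quot_pos_mul_le in hq.
  - pose proof (Rmult_le_compat_l dt _ _ hdt (H1_le_aplus_Am _ hf)); lra.
  - destruct hf as (hAm & _); apply Rmult_le_pos; [apply aplus_ge0 | exact hAm].
  - apply Rmult_le_pos; lra.
Qed.

Lemma node_update_nonneg dt ins outs :
  0 < dt ->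
  (forall p, In p ins -> piece_ok p) ->
  (forall p, In p outs -> piece_ok p) ->
  node_cfl dt ins outs ->
  0 <= node_update dt ins outs.
Proof.
  intros hdt hins houts [hcin hcout].
  assert (hin : 0 <= sumR (map (fun p => pdx p * pA p + dt * H1 (pf p)) ins)).
  { apply sumR_map_nonneg; intros p hp.
    apply inflow_piece_nonneg; [lra | auto | apply (hcin p hp)]. }
  assert (hout : 0 <= sumR (map (fun p => pdx p * pA p + - dt * H1 (pf p)) outs)).
  { apply sumR_map_nonneg; intros p hp.
    apply outflow_piece_nonneg; [lra | auto | apply (hcout p hp)]. }
  rewrite !sumR_map_add_scale in *.
  unfold node_update, node_volume; lra.
Qed.

Theorem theorem1 :
  (* (i) interior cells *)
  (forall (dt dx Abar : R) (fL fR : iface),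
     0 < dx -> 0 <= Abar -> iface_ok fL -> iface_ok fR -> 0 < dt ->
     le_quot_pos dt dx (aplus fL - aminus fR) ->
     le_quot_pos dt (dx * Abar) (aplus fR * Am fR - aminus fL * Ap fL) ->
     0 <= cell_update dt dx Abar fL fR)
  /\
  (* (ii) junction nodes *)
  (forall (dt : R) (ins outs : list piece),
     0 < dt ->
     (forall p, In p ins -> piece_ok p) ->
     (forall p, In p outs -> piece_ok p) ->
     node_cfl dt ins outs ->
     0 <= node_update dt ins outs).
Proof.
  split.
  - intros dt dx Abar fL fR hdx hA hL hR hdt _ hq.
    exact (cell_update_nonneg dt dx Abar fL fR hdx hA hL hR hdt hq).
  - exact node_update_nonneg.
Qed.
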